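(* For every two-qubit density matrix $\sigma$ there exists a single-qubit unitary $U$ such that $$\bar F_{\mathrm{dummy}}=\bar F_{\mathrm{trap}}=F_{\mathrm{tel}}(\sigma),$$ where $\bar F_{\mathrm{dummy}}=\tfrac12\big(\langle 0|\Lambda_{\sigma,U}(|0\rangle\langle0|)|0\rangle+\langle 1|\Lambda_{\sigma,U}(|1\rangle\langle1|)|1\rangle\big)$, $\bar F_{\mathrm{trap}}=\tfrac18\sum_{\theta\in\Theta}\langle+_\theta|\Lambda_{\sigma,U}(|+_\theta\rangle\langle+_\theta|)|+_\theta\rangle$, and $F_{\mathrm{tel}}(\sigma)=\int\langle\psi|\Lambda_\sigma(|\psi\rangle\langle\psi|)|\psi\rangle\,d\psi$ with the integral over the Haar (uniform) measure on single-qubit pure states.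
   Context: $\Theta=\{i\pi/4\}_{0\le i\le7}$ and $|\pm_\theta\rangle=\frac1{\sqrt2}(|0\rangle\pm e^{i\theta}|1\rangle)$. Let $|\Phi^+\rangle=\frac1{\sqrt2}(|00\rangle+|11\rangle)$ and $|\Phi_{ij}\rangle=(X^iZ^j\otimes\mathbf 1)|\Phi^+\rangle$ for $i,j\in\{0,1\}$. For a two-qubit state $\sigma$ on registers $S$ (sender) and $R$ (receiver), the teleportation channel is $\Lambda_\sigma(\rho)=\sum_{i,j\in\{0,1\}}X^iZ^j\,\langle\Phi_{ij}|_{IS}(\rho_I\otimes\sigma_{SR})|\Phi_{ij}\rangle_{IS}\,(X^iZ^j)^\dagger$. For a single-qubit unitary $U$, the rotated teleportation channel is $\Lambda_{\sigma,U}(\rho)=U^\dagger\Lambda_\sigma(U\rho U^\dagger)U$. *)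

From HB Require Import structures.
From mathcomp Require Import all_boot all_order all_algebra.
From mathcomp Require Import all_classical all_reals all_analysis.
From mathcomp Require Import complex mxtens.

Set Implicit Arguments.
Unset Strict Implicit.
Unset Printing Implicit Defensive.

Import Order.TTheory GRing.Theory Num.Theory.
Local Open Scope ring_scope.
Local Open Scope complex_scope.

Section Teleport.
Variable R : realType.
Local Notation C := (R[i]).

Definition adj {m n} (A : 'M[C]_(m, n)) : 'M[C]_(n, m) := (map_mx conjc A)^T.

Definition density_mx {n} (s : 'M[C]_n) : Prop :=
  [/\ adj s = s,
      (forall v : 'cV[C]_n, 0 <= (adj v *m s *m v) 0 0)
    & \tr s = 1].

Definition unitary_mx {n} (U : 'M[C]_n) : Prop :=
  adj U *m U = 1%:M /\ U *m adj U = 1%:M.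

Definition ket (b : 'I_2) : 'cV[C]_2 := delta_mx b 0.

Definition Xg : 'M[C]_2 := \matrix_(i, j) (i != j)%:R.
Definition Zg : 'M[C]_2 := \matrix_(i, j) ((i == j)%:R * (-1) ^+ (val i)).

Definition XZ (i j : 'I_2) : 'M[C]_2 := Xg ^+ i * Zg ^+ j.

Definition invsqrt2 : C := ((Num.sqrt (2 : R))^-1)%:C.

Definition PhiP : 'cV[C]_(2 * 2) :=
  invsqrt2 *: (ket 0 *t ket 0 + ket 1 *t ket 1).

Definition Phi (i j : 'I_2) : 'cV[C]_(2 * 2) := (XZ i j *t (1%:M : 'M[C]_2)) *m PhiP.

(* <Phi_ij|_{IS} (rho_I (x) sigma_SR) |Phi_ij>_{IS}, an operator on register R.
   Registers ordered I, S, R (I most significant). *)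
Definition proj_IS (sigma : 'M[C]_(2 * 2)) (rho : 'M[C]_2) (i j : 'I_2) : 'M[C]_2 :=
  let P : 'M[C]_(2 * 2 * 2, 1 * 2) := Phi i j *t (1%:M : 'M[C]_2) in
  adj P *m ((rho *t sigma : 'M[C]_(2 * (2 * 2))) : 'M[C]_(2 * 2 * 2)) *m P.

Definition tele (sigma : 'M[C]_(2 * 2)) (rho : 'M[C]_2) : 'M[C]_2 :=
  \sum_(i < 2) \sum_(j < 2) (XZ i j *m proj_IS sigma rho i j *m adj (XZ i j)).

Definition teleU (sigma : 'M[C]_(2 * 2)) (U : 'M[C]_2) (rho : 'M[C]_2) : 'M[C]_2 :=
  adj U *m tele sigma (U *m rho *m adj U) *m U.

Definition expect (psi : 'cV[C]_2) (A : 'M[C]_2) : C := (adj psi *m A *m psi) 0 0.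

Definition ketbra (psi : 'cV[C]_2) : 'M[C]_2 := psi *m adj psi.

Definition expi (t : R) : C := cos t +i* sin t.

Definition ket_plus (t : R) : 'cV[C]_2 := invsqrt2 *: (ket 0 + expi t *: ket 1).

Definition theta_k (k : 'I_8) : R := (k%:R * pi) / 4.

Definition F_dummy (sigma : 'M[C]_(2 * 2)) (U : 'M[C]_2) : C :=
  2^-1 * (expect (ket 0) (teleU sigma U (ketbra (ket 0)))
        + expect (ket 1) (teleU sigma U (ketbra (ket 1)))).

Definition F_trap (sigma : 'M[C]_(2 * 2)) (U : 'M[C]_2) : C :=
  8^-1 * \sum_(k < 8) expect (ket_plus (theta_k k))
                         (teleU sigma U (ketbra (ket_plus (theta_k k)))).

(* Bloch-sphere parametrisation of single-qubit pure states:
   |psi(t,p)> = cos(t/2)|0> + e^{i p} sin(t/2)|1>, t in [0,pi], p in [0,2pi];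
   the Haar (uniform) measure is sin t dt dp / (4 pi). *)
Definition bloch_ket (t p : R) : 'cV[C]_2 :=
  (cos (t / 2))%:C *: ket 0 + (expi p * (sin (t / 2))%:C) *: ket 1.

Definition tele_fid_at (sigma : 'M[C]_(2 * 2)) (t p : R) : R :=
  complex.Re (expect (bloch_ket t p) (tele sigma (ketbra (bloch_ket t p)))).

Definition F_tel (sigma : 'M[C]_(2 * 2)) : R :=
  (4 * pi)^-1 *
  Rintegral lebesgue_measure `[0, pi]%classic
    (fun t => sin t * Rintegral lebesgue_measure `[0, 2 * pi]%classic
                        (fun p => tele_fid_at sigma t p)).

End Teleport.

(** The teleportation channel of a resource [sigma] is the Pauli channel
    [rho |-> sum_ij p_ij (X^i Z^j) rho (X^i Z^j)^*] whose weights [p_ij] are the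
    populations of [sigma] in the Bell basis.  Hence the fidelity of a pure input
    with Bloch vector [(x, y, z)] is [p_00 + p_10 x^2 + p_11 y^2 + p_01 z^2], and
    its average over any family of inputs only involves the second moments of
    their Bloch coordinates; for the Haar measure these are all [1/3].  The
    rotation [U = c + i d (X - Y)] with [c^2 + 2 d^2 = 1] and [(2 c d)^2 = 1/3]
    maps the z-axis onto a diagonal of the cube, so the images under [U] of the
    two computational states, and of the eight equatorial states [|+_theta>],
    again have all three second moments equal to [1/3]. *)

From HB Require Import structures.
From mathcomp Require Import all_boot all_order all_algebra.
From mathcomp Require Import all_classical all_reals all_analysis.
From mathcomp Require Import complex mxtens.
From mathcomp Require Import ring lra.

Set Implicit Arguments.
Unset Strict Implicit.
Unset Printing Implicit Defensive.

Import Order.TTheory GRing.Theory Num.Theory.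
(* [ring_scope] is opened last so that [^*] and ['i] uniformly denote [Num.conj]
   and [Num.imaginary]; mixing them with [conjc] and ['i%C] defeats rewriting. *)
Local Open Scope complex_scope.
Local Open Scope ring_scope.

Lemma ord2_cases (x : 'I_2) : x = 0 \/ x = 1.
Proof. by case: x => [[|[|//]]] ?; [left | right]; apply: val_inj. Qed.

Lemma ord2_addxx (x : 'I_2) : x + x = 0.
Proof. by case: (ord2_cases x) => ->; apply/eqP. Qed.

Ltac ord2_simpl := rewrite ?addr0 ?add0r ?ord2_addxx /= -?[(1 %% 2)%N]/1%N.

Lemma big_ord2 (V : nmodType) (F : 'I_2 -> V) : \sum_(i < 2) F i = F 0 + F 1.
Proof. by rewrite big_ord_recl big_ord1; congr (_ + F _); apply: val_inj. Qed.

Lemma big_mxtens_index (V : nmodType) m n (F : 'I_(m * n) -> V) :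
  \sum_(k < m * n) F k = \sum_(i < m) \sum_(j < n) F (mxtens_index (i, j)).
Proof.
rewrite pair_big (reindex (@mxtens_unindex m n)) /=; last first.
  by exists (@mxtens_index m n) => k _; rewrite (mxtens_indexK, mxtens_unindexK).
by apply: eq_bigr => k _; rewrite mxtens_unindexK.
Qed.

Lemma mxtens_unindexA (i j k : 'I_2) :
  @mxtens_unindex 2 (2 * 2) (@mxtens_index (2 * 2) 2 (mxtens_index (i, j), k))
  = (i, mxtens_index (j, k)).
Proof.
rewrite -[RHS]mxtens_indexK; congr mxtens_unindex; apply: val_inj => /=.
by rewrite mulnDl -mulnA addnA.
Qed.

Lemma mxtens_unindex1l (k : 'I_2) : @mxtens_unindex 1 2 k = (0, k).
Proof. by case: (ord2_cases k) => ->; apply/eqP. Qed.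

Section Teleportation.
Variable R : realType.
Local Notation C := R[i].

Lemma adjE m n (A : 'M[C]_(m, n)) i j : adj A i j = (A j i)^*.
Proof. by rewrite !mxE. Qed.

Lemma adjK m n (A : 'M[C]_(m, n)) : adj (adj A) = A.
Proof. by apply/matrixP => i j; rewrite !adjE conjCK. Qed.

Lemma adjM m n p (A : 'M[C]_(m, n)) (B : 'M[C]_(n, p)) : adj (A *m B) = adj B *m adj A.
Proof. by rewrite /adj map_mxM trmx_mul. Qed.

Lemma adjD m n (A B : 'M[C]_(m, n)) : adj (A + B) = adj A + adj B.
Proof. by apply/matrixP => i j; rewrite !mxE rmorphD. Qed.

Lemma adj_scale m n (a : C) (A : 'M[C]_(m, n)) : adj (a *: A) = a^* *: adj A.
Proof. by apply/matrixP => i j; rewrite !mxE rmorphM. Qed.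

Lemma adj_mulmxE m n p (A : 'M[C]_(n, m)) (B : 'M[C]_(n, p)) i j :
  (adj A *m B) i j = ((adj B *m A) j i)^*.
Proof. by rewrite -adjE adjM adjK. Qed.

Lemma adj_ket (b : 'I_2) : adj (ket R b) = delta_mx 0 b.
Proof. by rewrite /adj /ket map_delta_mx trmx_delta. Qed.

Lemma tensmx_cV1E n (v : 'cV[C]_n) a (s r : 'I_2) :
  (v *t (1%:M : 'M[C]_2)) (mxtens_index (a, s)) r = v a 0 * (s == r)%:R.
Proof. by rewrite mxE mxtens_indexK mxtens_unindex1l !mxE. Qed.

Lemma mulmx_tens1E m n (A : 'M[C]_(m, n * 2)) (v : 'cV[C]_n) k (r : 'I_2) :
  (A *m (v *t (1%:M : 'M[C]_2))) k r = \sum_(a < n) A k (mxtens_index (a, r)) * v a 0.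
Proof.
rewrite mxE big_mxtens_index; apply: eq_bigr => a _.
rewrite (bigD1 r) //= tensmx_cV1E eqxx mulr1 big1 ?addr0 // => s /negbTE sr.
by rewrite tensmx_cV1E sr /= !mulr0.
Qed.

Lemma adj_tens1_mulmxE m n (v : 'cV[C]_n) (A : 'M[C]_(n * 2, m)) (r : 'I_2) k :
  (adj (v *t (1%:M : 'M[C]_2)) *m A) r k =
  \sum_(a < n) adj v 0 a * A (mxtens_index (a, r)) k.
Proof.
rewrite adj_mulmxE mulmx_tens1E rmorph_sum; apply: eq_bigr => a _.
by rewrite rmorphM adjE /= conjCK mulrC adjE.
Qed.

Lemma tensmxAE (rho : 'M[C]_2) (sigma : 'M[C]_(2 * 2)) (a b c a' b' c' : 'I_2) :
  ((rho *t sigma : 'M[C]_(2 * (2 * 2))) : 'M[C]_(2 * 2 * 2))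
    (mxtens_index (mxtens_index (a, b), c)) (mxtens_index (mxtens_index (a', b'), c'))
  = rho a a' * sigma (mxtens_index (b, c)) (mxtens_index (b', c')).
Proof. by rewrite mxE !mxtens_unindexA. Qed.

Lemma XZ_matrixE (i j : 'I_2) :
  XZ R i j = \matrix_(x, y) ((-1) ^+ (j * y) *+ (x == y + i)).
Proof.
apply/matrixP => x y; rewrite mxE /XZ.
case: (ord2_cases i) => ->; case: (ord2_cases j) => ->;
  rewrite ?expr0 ?expr1 ?mul1r ?mulr1 -?mulmxE ?mxE ?big_ord2 ?mxE;
  case: (ord2_cases x) => ->; case: (ord2_cases y) => ->; ord2_simpl; ring.
Qed.

Lemma XZE (i j x y : 'I_2) : XZ R i j x y = (-1) ^+ (j * y) *+ (x == y + i).
Proof. by rewrite XZ_matrixE mxE. Qed.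

Lemma conj_XZ (i j x y : 'I_2) : (XZ R i j x y)^* = XZ R i j x y.
Proof. by rewrite XZE rmorphMn rmorphXn rmorphN1. Qed.

Lemma adj_XZ (i j : 'I_2) : adj (XZ R i j) = (-1) ^+ (i * j) *: XZ R i j.
Proof.
apply/matrixP => x y; rewrite adjE conj_XZ [RHS]mxE !XZE.
case: (ord2_cases i) => ->; case: (ord2_cases j) => ->;
  case: (ord2_cases x) => ->; case: (ord2_cases y) => ->; ord2_simpl; ring.
Qed.

(* In exponents, [x + i] is the sum in [nat] of the two ordinals; only its parity
   matters. *)
Lemma sum_XZ_row (i j x : 'I_2) (F : 'I_2 -> C) :
  \sum_(y < 2) XZ R i j x y * F y = (-1) ^+ (j * (x + i)) * F (x + i).
Proof.
rewrite big_ord2 !XZE.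
case: (ord2_cases i) => ->; case: (ord2_cases j) => ->; case: (ord2_cases x) => ->;
  ord2_simpl; ring.
Qed.

Lemma XZ_sandwichE (i j a b : 'I_2) (M : 'M[C]_2) :
  (XZ R i j *m M *m adj (XZ R i j)) a b =
  (-1) ^+ (j * (a + i)) * (-1) ^+ (j * (b + i)) * M (a + i) (b + i).
Proof.
rewrite mxE; under eq_bigr => r' _ do rewrite mxE sum_XZ_row adjE conj_XZ mulrC.
by rewrite sum_XZ_row mulrCA mulrA.
Qed.

Lemma invsqrt2_sqr : invsqrt2 R * invsqrt2 R = 2^-1.
Proof. by rewrite -rmorphM -invfM -expr2 sqr_sqrtr // fmorphV rmorph_nat. Qed.

Lemma PhiE (i j x y : 'I_2) :
  Phi R i j (mxtens_index (x, y)) 0 = invsqrt2 R * XZ R i j x y.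
Proof.
rewrite /Phi /PhiP mxE big_mxtens_index !big_ord2 !tensmxE !mxE.
by case: (ord2_cases y) => ->; rewrite /=; ring.
Qed.

Lemma adj_PhiE (i j x y : 'I_2) :
  adj (Phi R i j) 0 (mxtens_index (x, y)) = invsqrt2 R * XZ R i j x y.
Proof.
by rewrite adjE PhiE rmorphM; congr (_ * _); [exact: conjc_real | exact: conj_XZ].
Qed.

Lemma proj_ISE (sigma : 'M[C]_(2 * 2)) (rho : 'M[C]_2) (i j r r' : 'I_2) :
  proj_IS sigma rho i j r r' = 2^-1 * \sum_(x < 2) \sum_(x' < 2)
    (-1) ^+ (j * (x + i)) * (-1) ^+ (j * (x' + i)) * rho x x' *
    sigma (mxtens_index (x + i, r)) (mxtens_index (x' + i, r')).
Proof.
rewrite /proj_IS mulmx_tens1E big_mxtens_index !big_ord2.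
rewrite !adj_tens1_mulmxE !big_mxtens_index !big_ord2 !adj_PhiE !PhiE !tensmxAE.
have s2 := invsqrt2_sqr.
case: (ord2_cases i) => ->; case: (ord2_cases j) => ->;
  rewrite !XZE; ord2_simpl; ring: s2.
Qed.

Definition bell_pop (sigma : 'M[C]_(2 * 2)) (i j : 'I_2) : C :=
  (adj (Phi R i j) *m sigma *m Phi R i j) 0 0.

Lemma bell_popE (sigma : 'M[C]_(2 * 2)) (i j : 'I_2) :
  bell_pop sigma i j = 2^-1 * \sum_(x < 2) \sum_(x' < 2)
    (-1) ^+ (j * (x + i)) * (-1) ^+ (j * (x' + i)) *
    sigma (mxtens_index (x, x + i)) (mxtens_index (x', x' + i)).
Proof.
rewrite /bell_pop mxE big_mxtens_index !big_ord2 ![(adj _ *m _) _ _]mxE.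
rewrite !big_mxtens_index !big_ord2 !adj_PhiE !PhiE.
have s2 := invsqrt2_sqr.
case: (ord2_cases i) => ->; case: (ord2_cases j) => ->;
  rewrite !XZE; ord2_simpl; ring: s2.
Qed.

Lemma tele_pauli (sigma : 'M[C]_(2 * 2)) (rho : 'M[C]_2) :
  tele sigma rho =
  \sum_(i < 2) \sum_(j < 2) bell_pop sigma i j *: (XZ R i j *m rho *m adj (XZ R i j)).
Proof.
apply/matrixP => a b; rewrite /tele !summxE.
under eq_bigr => i _ do rewrite summxE.
under eq_bigr => i _ do under eq_bigr => j _ do rewrite XZ_sandwichE proj_ISE.
under [RHS]eq_bigr => i _ do rewrite summxE.
under [RHS]eq_bigr => i _ do under eq_bigr => j _ do rewrite mxE XZ_sandwichE bell_popE.
rewrite !big_ord2.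
by case: (ord2_cases a) => ->; case: (ord2_cases b) => ->; ord2_simpl; ring.
Qed.

Lemma expectE (phi : 'cV[C]_2) (A : 'M[C]_2) :
  expect phi A = \sum_(x < 2) \sum_(y < 2) adj phi 0 x * A x y * phi y 0.
Proof.
rewrite /expect mxE; under eq_bigr => y _ do rewrite mxE mulr_suml.
exact: exchange_big.
Qed.

Lemma expect_sum (I : finType) (phi : 'cV[C]_2) (A : I -> 'M[C]_2) :
  expect phi (\sum_i A i) = \sum_i expect phi (A i).
Proof. by rewrite /expect mulmx_sumr mulmx_suml summxE. Qed.

Lemma expectD (phi : 'cV[C]_2) (A B : 'M[C]_2) :
  expect phi (A + B) = expect phi A + expect phi B.
Proof. by rewrite /expect mulmxDr mulmxDl mxE. Qed.

Lemma expectZ (phi : 'cV[C]_2) (c : C) (A : 'M[C]_2) :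
  expect phi (c *: A) = c * expect phi A.
Proof. by rewrite /expect -scalemxAr -scalemxAl mxE. Qed.

Lemma expect_sandwich (phi : 'cV[C]_2) (A : 'M[C]_2) :
  expect phi (A *m ketbra phi *m adj A) = expect phi A * expect phi (adj A).
Proof.
rewrite /expect /ketbra.
have -> : adj phi *m (A *m (phi *m adj phi) *m adj A) *m phi =
          (adj phi *m A *m phi) *m (adj phi *m adj A *m phi) by rewrite !mulmxA.
by rewrite mxE big_ord1.
Qed.

Lemma expect_mulmx (A M : 'M[C]_2) (phi : 'cV[C]_2) :
  expect (A *m phi) M = expect phi (adj A *m M *m A).
Proof. by rewrite /expect adjM !mulmxA. Qed.

Lemma expect_scale (a : C) (phi : 'cV[C]_2) (M : 'M[C]_2) :
  expect (a *: phi) M = a^* * a * expect phi M.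
Proof. by rewrite /expect adj_scale -!scalemxAl -scalemxAr scalerA mxE. Qed.

Lemma expect_ket (b : 'I_2) (M : 'M[C]_2) : expect (ket R b) M = M b b.
Proof. by rewrite /expect adj_ket /ket -rowE -colE !mxE. Qed.

Lemma expect_qubit (a b : C) (M : 'M[C]_2) :
  expect (a *: ket R 0 + b *: ket R 1) M =
  a^* * a * M 0 0 + a^* * b * M 0 1 + b^* * a * M 1 0 + b^* * b * M 1 1.
Proof.
rewrite expectE adjD !adj_scale !adj_ket !big_ord2 !mxE.
by ord2_simpl; ring.
Qed.

Definition tele_fidelity (sigma : 'M[C]_(2 * 2)) (phi : 'cV[C]_2) : C :=
  expect phi (tele sigma (ketbra phi)).

Lemma expect_teleU sigma (U : 'M[C]_2) psi :
  expect psi (teleU sigma U (ketbra psi)) = tele_fidelity sigma (U *m psi).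
Proof. by rewrite /teleU /tele_fidelity /expect /ketbra adjM !mulmxA. Qed.

Definition Yg : 'M[C]_2 := 'i *: XZ R 1 1.

Definition bloch_norm (phi : 'cV[C]_2) := expect phi (XZ R 0 0).
Definition bloch_x (phi : 'cV[C]_2) := expect phi (XZ R 1 0).
Definition bloch_y (phi : 'cV[C]_2) := expect phi Yg.
Definition bloch_z (phi : 'cV[C]_2) := expect phi (XZ R 0 1).

(* Here and below, [bell_pop sigma], [expect phi] and [XZ R] are abstracted before
   the sums are expanded: otherwise [rewrite] and [ring] unfold them whenever they
   compare two of their instances. *)
Lemma tele_fidelity_bloch sigma phi : tele_fidelity sigma phi =
  bell_pop sigma 0 0 * bloch_norm phi ^+ 2 + bell_pop sigma 1 0 * bloch_x phi ^+ 2 +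
  bell_pop sigma 1 1 * bloch_y phi ^+ 2 + bell_pop sigma 0 1 * bloch_z phi ^+ 2.
Proof.
rewrite /tele_fidelity tele_pauli expect_sum.
under eq_bigr => i _ do rewrite expect_sum.
under eq_bigr => i _ do under eq_bigr => j _ do
  rewrite expectZ expect_sandwich adj_XZ expectZ.
rewrite /bloch_norm /bloch_x /bloch_y /Yg expectZ /bloch_z.
move: (bell_pop sigma) (expect phi) (XZ R) => p e P.
by rewrite !big_ord2; ord2_simpl; ring: (mulCii C).
Qed.

(* [Urot c d = c + i d (X - Y)]. *)
Definition Urot (c d : R) : 'M[C]_2 :=
  \matrix_(x, y) if x == y then c%:C else ((-1) ^+ y + 'i) * d%:C.

Lemma adj_Urot (c d : R) : adj (Urot c d) = Urot c (- d).
Proof.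
apply/matrixP => x y; rewrite !mxE.
case: (ord2_cases x) => ->; case: (ord2_cases y) => ->; ord2_simpl;
  apply/eqP; rewrite eq_complex /=; apply/andP; split; apply/eqP; ring.
Qed.

Lemma Urot_unitary (c d : R) : c ^+ 2 + 2 * d ^+ 2 = 1 -> unitary_mx (Urot c d).
Proof.
move=> cd1; have c2 : c%:C ^+ 2 = 1 - 2 * d%:C ^+ 2 :> C.
  by rewrite -[X in X - _]/(1%:C) -cd1; ring.
rewrite /unitary_mx adj_Urot; split; apply/matrixP => x y;
  rewrite !mxE big_ord2 !mxE;
  case: (ord2_cases x) => ->; case: (ord2_cases y) => ->; ord2_simpl;
  ring: c2 (mulCii C).
Qed.

Lemma Urot_conj_pauli (c d : R) :
  let U := Urot c d in
  [/\ adj U *m XZ R 0 0 *m U = (c ^+ 2 + 2 * d ^+ 2)%:C *: XZ R 0 0,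
      adj U *m XZ R 1 0 *m U =
        (c ^+ 2)%:C *: XZ R 1 0 + (- 2 * d ^+ 2)%:C *: Yg + (2 * c * d)%:C *: XZ R 0 1,
      adj U *m Yg *m U =
        (- 2 * d ^+ 2)%:C *: XZ R 1 0 + (c ^+ 2)%:C *: Yg + (2 * c * d)%:C *: XZ R 0 1 &
      adj U *m XZ R 0 1 *m U =
        (- 2 * c * d)%:C *: XZ R 1 0 + (- 2 * c * d)%:C *: Yg
        + (c ^+ 2 - 2 * d ^+ 2)%:C *: XZ R 0 1].
Proof.
rewrite /= adj_Urot /Yg !XZ_matrixE.
by split; apply/matrixP => x y; rewrite !(mxE, big_ord2);
  case: (ord2_cases x) => ->; case: (ord2_cases y) => ->; ord2_simpl; ring: (mulCii C).
Qed.

Lemma bloch_Urot (c d : R) (phi : 'cV[C]_2) :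
  let psi := Urot c d *m phi in
  [/\ bloch_norm psi = (c ^+ 2 + 2 * d ^+ 2)%:C * bloch_norm phi,
      bloch_x psi = (c ^+ 2)%:C * bloch_x phi + (- 2 * d ^+ 2)%:C * bloch_y phi
                    + (2 * c * d)%:C * bloch_z phi,
      bloch_y psi = (- 2 * d ^+ 2)%:C * bloch_x phi + (c ^+ 2)%:C * bloch_y phi
                    + (2 * c * d)%:C * bloch_z phi &
      bloch_z psi = (- 2 * c * d)%:C * bloch_x phi + (- 2 * c * d)%:C * bloch_y phi
                    + (c ^+ 2 - 2 * d ^+ 2)%:C * bloch_z phi].
Proof.
have [U1 UX UY UZ] := Urot_conj_pauli c d.
rewrite /bloch_norm /bloch_x /bloch_y /bloch_z /=.
move: (XZ R) (Yg) U1 UX UY UZ => P Y U1 UX UY UZ.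
by split; rewrite expect_mulmx ?(U1, UX, UY, UZ) ?expectD !expectZ;
  move: (expect phi) => e; ring.
Qed.

Lemma tele_fidelity_Urot (sigma : 'M[C]_(2 * 2)) (c d : R) (phi : 'cV[C]_2) :
  tele_fidelity sigma (Urot c d *m phi) =
  bell_pop sigma 0 0 * ((c ^+ 2 + 2 * d ^+ 2)%:C * bloch_norm phi) ^+ 2 +
  bell_pop sigma 1 0 * ((c ^+ 2)%:C * bloch_x phi + (- 2 * d ^+ 2)%:C * bloch_y phi
                        + (2 * c * d)%:C * bloch_z phi) ^+ 2 +
  bell_pop sigma 1 1 * ((- 2 * d ^+ 2)%:C * bloch_x phi + (c ^+ 2)%:C * bloch_y phi
                        + (2 * c * d)%:C * bloch_z phi) ^+ 2 +
  bell_pop sigma 0 1 * ((- 2 * c * d)%:C * bloch_x phi + (- 2 * c * d)%:C * bloch_y phi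
                        + (c ^+ 2 - 2 * d ^+ 2)%:C * bloch_z phi) ^+ 2.
Proof. by rewrite tele_fidelity_bloch; have [-> -> -> ->] := bloch_Urot c d phi. Qed.

Lemma conjM (x y : C) : (x * y)^* = x^* * y^*.
Proof. exact: rmorphM. Qed.

Lemma conj_real (x : R) : (x%:C)^* = x%:C :> C.
Proof. exact: conjc_real. Qed.

Lemma conj_invsqrt2 : (invsqrt2 R)^* = invsqrt2 R.
Proof. exact: conjc_real. Qed.

Lemma conj_expi (t : R) : (expi t)^* = expi (- t).
Proof. by rewrite /expi cosN sinN. Qed.

Lemma expiE (t : R) : expi t = (cos t)%:C + 'i * (sin t)%:C.
Proof. by apply/eqP; rewrite eq_complex /=; apply/andP; split; apply/eqP; ring. Qed.

Lemma cos2sin2C (t : R) : (cos t)%:C ^+ 2 = 1 - (sin t)%:C ^+ 2 :> C.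
Proof. by rewrite -[X in X - _]/(1%:C) -(cos2Dsin2 t); ring. Qed.

Lemma bloch_coords_ket (b : 'I_2) :
  [/\ bloch_norm (ket R b) = 1, bloch_x (ket R b) = 0, bloch_y (ket R b) = 0 &
      bloch_z (ket R b) = (-1) ^+ b].
Proof.
rewrite /bloch_norm /bloch_x /bloch_y /bloch_z /Yg !expect_ket !XZ_matrixE !mxE.
by case: (ord2_cases b) => ->; ord2_simpl; split; ring.
Qed.

Lemma bloch_coords_ket_plus (t : R) :
  [/\ bloch_norm (ket_plus t) = 1, bloch_x (ket_plus t) = (cos t)%:C,
      bloch_y (ket_plus t) = (sin t)%:C & bloch_z (ket_plus t) = 0].
Proof.
rewrite /bloch_norm /bloch_x /bloch_y /bloch_z /Yg /ket_plus -[ket R 0]scale1r.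
rewrite !expect_scale conj_invsqrt2 invsqrt2_sqr !expect_qubit !XZ_matrixE !mxE.
rewrite rmorph1 conj_expi !expiE cosN sinN; ord2_simpl.
have c2 := cos2sin2C t.
by split; field: c2 (mulCii C).
Qed.

Lemma bloch_coords_bloch_ket (t p : R) :
  [/\ bloch_norm (bloch_ket t p) = 1, bloch_x (bloch_ket t p) = (sin t * cos p)%:C,
      bloch_y (bloch_ket t p) = (sin t * sin p)%:C &
      bloch_z (bloch_ket t p) = (cos t)%:C].
Proof.
have ht : t = t / 2 + t / 2 by field.
have -> : sin t = 2 * sin (t / 2) * cos (t / 2) by rewrite {1}ht sinD; ring.
have -> : cos t = cos (t / 2) ^+ 2 - sin (t / 2) ^+ 2 by rewrite {1}ht cosD; ring.
rewrite /bloch_norm /bloch_x /bloch_y /bloch_z /Yg !expect_qubit !XZ_matrixE !mxE.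
rewrite conjM !conj_real conj_expi !expiE cosN sinN; ord2_simpl.
have c2 := cos2sin2C p; have c2h := cos2sin2C (t / 2).
by split; ring: c2 c2h (mulCii C).
Qed.

Definition mean_fidelity (sigma : 'M[C]_(2 * 2)) : C :=
  bell_pop sigma 0 0 + (bell_pop sigma 1 0 + bell_pop sigma 1 1 + bell_pop sigma 0 1) / 3.

Lemma sum_theta_sqr (X Y : R) :
  \sum_(k < 8) (X * cos (theta_k R k) + Y * sin (theta_k R k)) ^+ 2 = 4 * (X ^+ 2 + Y ^+ 2).
Proof.
rewrite /theta_k.
rewrite -(big_mkord xpredT (fun k => (X * cos (k%:R * pi / 4) + Y * sin (k%:R * pi / 4)) ^+ 2)).
rewrite !big_nat_recl // big_geq // addr0.
have -> : 0 * pi / 4 = 0 :> R by rewrite !mul0r.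
have -> : 1 * pi / 4 = pi / 4 :> R by rewrite mul1r.
have -> : 2 * pi / 4 = pi / 2 :> R by field.
have -> : 3 * pi / 4 = pi / 4 + pi / 2 :> R by field.
have -> : 4 * pi / 4 = pi :> R by field.
have -> : 5 * pi / 4 = pi / 4 + pi :> R by field.
have -> : 6 * pi / 4 = pi / 2 + pi :> R by field.
have -> : 7 * pi / 4 = pi / 4 + pi / 2 + pi :> R by field.
rewrite !cosDpi !sinDpi !cosDpihalf !sinDpihalf cos_pihalf sin_pihalf cos0 sin0 cospi sinpi.
by ring: (cos2sin2 (pi / 4 : R)).
Qed.

Lemma sum_theta_sqrC (X Y : R) :
  \sum_(k < 8) ((X * cos (theta_k R k) + Y * sin (theta_k R k))%:C) ^+ 2 =
  (4 * (X ^+ 2 + Y ^+ 2))%:C :> C.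
Proof. by rewrite -sum_theta_sqr rmorph_sum; apply: eq_bigr => k _; rewrite rmorphXn. Qed.

Lemma cube_diagonal_params :
  exists c d : R, c ^+ 2 + 2 * d ^+ 2 = 1 /\ (2 * c * d) ^+ 2 = 3^-1.
Proof.
have w1 : 1 <= Num.sqrt 3 :> R by rewrite -[X in X <= _]sqrtr1 ler_sqrt //; lra.
pose x : R := (Num.sqrt 3)^-1.
have x0 : 0 <= x by rewrite invr_ge0; lra.
have x1 : x <= 1 by rewrite invf_le1 //; lra.
have x2 : x ^+ 2 = 3^-1 by rewrite exprVn sqr_sqrtr //; lra.
exists (Num.sqrt ((1 + x) / 2)), (Num.sqrt ((1 - x) / 4)).
rewrite !exprMn !sqr_sqrtr; [split | lra | lra].
- by field.
- have -> : 2 ^+ 2 * ((1 + x) / 2) * ((1 - x) / 4) = (1 - x ^+ 2) / 2 by field.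
  by rewrite x2; field.
Qed.

Section CubeDiagonal.
Variables c d : R.
Hypothesis cd_norm : c ^+ 2 + 2 * d ^+ 2 = 1.
Hypothesis cd_diag : (2 * c * d) ^+ 2 = 3^-1.

Lemma F_dummyE sigma : F_dummy sigma (Urot c d) = mean_fidelity sigma.
Proof.
have cz : (c ^+ 2 - 2 * d ^+ 2) ^+ 2 = 3^-1.
  have -> : (c ^+ 2 - 2 * d ^+ 2) ^+ 2 = (c ^+ 2 + 2 * d ^+ 2) ^+ 2 - 2 * (2 * c * d) ^+ 2.
    by ring.
  by rewrite cd_norm cd_diag; field.
transitivity (2^-1 * \sum_(b < 2) tele_fidelity sigma (Urot c d *m ket R b)).
  by rewrite big_ord2 /F_dummy !expect_teleU.
under eq_bigr => b _ do
  [rewrite tele_fidelity_Urot; have [-> -> -> ->] := bloch_coords_ket b].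
rewrite big_ord2 /mean_fidelity cd_norm; ord2_simpl.
rewrite !(exprMn, mulr0, add0r, mulr1) -!rmorphXn cd_diag cz.
move: (bell_pop sigma) => p.
by field.
Qed.

Lemma tele_fidelity_Urot_plus sigma t :
  tele_fidelity sigma (Urot c d *m ket_plus t) =
  bell_pop sigma 0 0 +
  bell_pop sigma 1 0 * ((c ^+ 2 * cos t + (- 2 * d ^+ 2) * sin t)%:C) ^+ 2 +
  bell_pop sigma 1 1 * ((- 2 * d ^+ 2 * cos t + c ^+ 2 * sin t)%:C) ^+ 2 +
  bell_pop sigma 0 1 * ((- 2 * c * d * cos t + (- 2 * c * d) * sin t)%:C) ^+ 2.
Proof.
rewrite tele_fidelity_Urot cd_norm; have [-> -> -> ->] := bloch_coords_ket_plus t.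
by move: (bell_pop sigma) => p; ring.
Qed.

Lemma F_trapE sigma : F_trap sigma (Urot c d) = mean_fidelity sigma.
Proof.
have exy : (c ^+ 2) ^+ 2 + (- 2 * d ^+ 2) ^+ 2 = 2 / 3.
  have -> : (c ^+ 2) ^+ 2 + (- 2 * d ^+ 2) ^+ 2 = (c ^+ 2 + 2 * d ^+ 2) ^+ 2 - (2 * c * d) ^+ 2.
    by ring.
  by rewrite cd_norm cd_diag; field.
have ez : (- 2 * c * d) ^+ 2 + (- 2 * c * d) ^+ 2 = 2 / 3.
  have -> : (- 2 * c * d) ^+ 2 = (2 * c * d) ^+ 2 by ring.
  by rewrite cd_diag; field.
rewrite /F_trap.
under eq_bigr => k _ do rewrite expect_teleU tele_fidelity_Urot_plus.
rewrite !big_split /= -!mulr_sumr !sum_theta_sqrC sumr_const card_ord.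
rewrite exy (addrC ((- 2 * d ^+ 2) ^+ 2)) exy ez /mean_fidelity.
by move: (bell_pop sigma) => p; field.
Qed.

End CubeDiagonal.

End Teleportation.

Section Haar.
Variable R : realType.
Local Notation C := R[i].
Import numFieldNormedType.Exports.
Local Open Scope classical_set_scope.

Lemma Rintegral_antiderivative (f F : R -> R) (a b : R) : a < b ->
  (forall x, derivable f x 1) -> (forall x, derivable F x 1) ->
  (forall x, 'D_1 F x = f x) ->
  Rintegral lebesgue_measure `[a, b] f = F b - F a.
Proof.
move=> ab df dF F'f.
have cF x : F y @[y --> x] --> F x.
  by apply: differentiable_continuous; rewrite -derivable1_diffP.
rewrite /Rintegral (@continuous_FTC2 R f F a b ab).
- by rewrite -EFinB.
- apply: continuous_subspaceT => x.
  by apply: differentiable_continuous; rewrite -derivable1_diffP.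
- split; first by move=> x _.
  + exact/cvg_at_right_filter/cF.
  + exact/cvg_at_left_filter/cF.
- by move=> x _; rewrite derive1E.
Qed.

Lemma Rintegral_cos_sin_sqr (k u v : R) :
  Rintegral lebesgue_measure `[0, 2 * pi] (fun p => k + u * cos p ^+ 2 + v * sin p ^+ 2) =
  2 * pi * (k + (u + v) / 2).
Proof.
have -> : (fun p => k + u * cos p ^+ 2 + v * sin p ^+ 2) =
          (cst k + cst u * (cos * cos) + cst v * (sin * sin) : R -> R).
  by apply/funext => p; rewrite !fctE; ring.
rewrite (@Rintegral_antiderivative _
  (cst (k + (u + v) / 2) * id + cst ((u - v) / 2) * (sin * cos))).
- have sin2pi' : sin (2 * pi) = 0 :> R by rewrite mulr_natl sin2pi.
  by rewrite !fctE /= sin2pi' sin0; ring.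
- by rewrite mulr_gt0 // pi_gt0.
- by move=> x; exact: ex_derive.
- by move=> x; exact: ex_derive.
- move=> x; rewrite derive_val !fctE /= -![_ *: _]/(_ * _).
  by field: (sin2cos2 x).
Qed.

Lemma Rintegral_sin_cos_sqr (k u : R) :
  Rintegral lebesgue_measure `[0, pi] (fun t => sin t * (k + u * cos t ^+ 2)) =
  2 * k + 2 * u / 3.
Proof.
have -> : (fun t => sin t * (k + u * cos t ^+ 2)) =
          (cst k * sin + cst u * (sin * cos * cos) : R -> R).
  by apply/funext => t; rewrite !fctE; ring.
rewrite (@Rintegral_antiderivative _ (cst (- k) * cos + cst (- u / 3) * (cos * cos * cos))).
- by rewrite !fctE /= cospi cos0; field.
- exact: pi_gt0.
- by move=> x; exact: ex_derive.
- by move=> x; exact: ex_derive.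
- by move=> x; rewrite derive_val !fctE /= -![_ *: _]/(_ * _); field.
Qed.

Lemma ReD (x y : C) : complex.Re (x + y) = complex.Re x + complex.Re y.
Proof. by case: x => a b; case: y => a' b'. Qed.

Lemma ReM_real (x : C) (r : R) : complex.Re (x * r%:C) = complex.Re x * r.
Proof. by case: x => a b /=; ring. Qed.

Lemma tele_fid_atE (sigma : 'M[C]_(2 * 2)) (t p : R) :
  tele_fid_at sigma t p =
  complex.Re (bell_pop sigma 0 0) + complex.Re (bell_pop sigma 1 0) * (sin t * cos p) ^+ 2
  + complex.Re (bell_pop sigma 1 1) * (sin t * sin p) ^+ 2
  + complex.Re (bell_pop sigma 0 1) * cos t ^+ 2.
Proof.
rewrite /tele_fid_at -/(tele_fidelity sigma (bloch_ket t p)) tele_fidelity_bloch.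
have [-> -> -> ->] := bloch_coords_bloch_ket t p.
by move: (bell_pop sigma) => q; rewrite expr1n mulr1 -!rmorphXn !ReD !ReM_real.
Qed.

Lemma haar_mean_quadratic (f : R -> R -> R) (q0 qx qy qz : R) :
  (forall t p, f t p = q0 + qx * (sin t * cos p) ^+ 2 + qy * (sin t * sin p) ^+ 2
                       + qz * cos t ^+ 2) ->
  (4 * pi)^-1 * Rintegral lebesgue_measure `[0, pi]
    (fun t => sin t * Rintegral lebesgue_measure `[0, 2 * pi] (fun p => f t p)) =
  q0 + (qx + qy + qz) / 3.
Proof.
move=> fE.
have inner t : Rintegral lebesgue_measure `[0, 2 * pi] (fun p => f t p) =
    2 * pi * (q0 + (qx + qy) / 2) + 2 * pi * (qz - (qx + qy) / 2) * cos t ^+ 2.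
  rewrite (_ : (fun p => f t p) = (fun p => q0 + qz * cos t ^+ 2 +
      qx * sin t ^+ 2 * cos p ^+ 2 + qy * sin t ^+ 2 * sin p ^+ 2)); last first.
    by apply/funext => p; rewrite fE; ring.
  by rewrite Rintegral_cos_sin_sqr; ring: (sin2cos2 t).
rewrite (_ : (fun t => _) = (fun t => sin t * (2 * pi * (q0 + (qx + qy) / 2) +
    2 * pi * (qz - (qx + qy) / 2) * cos t ^+ 2))); last by apply/funext => t; rewrite inner.
rewrite Rintegral_sin_cos_sqr.
have : pi != 0 :> R by rewrite gt_eqF // pi_gt0.
(* [field] would unfold [pi]. *)
by move: pi => P P0; field.
Qed.

Lemma F_telE (sigma : 'M[C]_(2 * 2)) :
  F_tel sigma = complex.Re (bell_pop sigma 0 0) +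
    (complex.Re (bell_pop sigma 1 0) + complex.Re (bell_pop sigma 1 1)
     + complex.Re (bell_pop sigma 0 1)) / 3.
Proof. exact: haar_mean_quadratic (tele_fid_atE sigma). Qed.

End Haar.

Section Hermitian.
Variable R : realType.
Local Notation C := R[i].

Lemma real_of_conj (z : C) : z^* = z -> z = (complex.Re z)%:C.
Proof.
case: z => a b /eqP; rewrite eq_complex /= => /andP[_ /eqP hb].
by apply/eqP; rewrite eq_complex /= eqxx /=; apply/eqP; lra.
Qed.

Lemma conj_bell_pop (sigma : 'M[C]_(2 * 2)) (i j : 'I_2) :
  adj sigma = sigma -> (bell_pop sigma i j)^* = bell_pop sigma i j.
Proof.
move=> herm; rewrite /bell_pop.
transitivity (adj (adj (Phi R i j) *m sigma *m Phi R i j) 0 0); first by rewrite adjE.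
by rewrite [adj (_ *m Phi R i j)]adjM [adj (_ *m sigma)]adjM adjK herm mulmxA.
Qed.

Lemma mean_fidelity_real (sigma : 'M[C]_(2 * 2)) : adj sigma = sigma ->
  mean_fidelity sigma = (complex.Re (bell_pop sigma 0 0) +
    (complex.Re (bell_pop sigma 1 0) + complex.Re (bell_pop sigma 1 1)
     + complex.Re (bell_pop sigma 0 1)) / 3)%:C.
Proof.
move=> herm; have r i j := real_of_conj (conj_bell_pop i j herm).
rewrite /mean_fidelity; move: (bell_pop sigma) r => p r.
rewrite {1}(r 0 0) {1}(r 1 0) {1}(r 1 1) {1}(r 0 1).
by field.
Qed.

End Hermitian.

Theorem lemma4 (R : realType) (sigma : 'M[R[i]]_(2 * 2)) :
  density_mx sigma ->
  exists U : 'M[R[i]]_2,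
    unitary_mx U /\
    F_dummy sigma U = F_trap sigma U /\
    F_trap sigma U = (F_tel sigma)%:C.
Proof.
case=> herm _ _.
have [c [d [cd_norm cd_diag]]] := cube_diagonal_params R.
exists (Urot c d); split; first exact: Urot_unitary.
rewrite F_dummyE // F_trapE // F_telE mean_fidelity_real //.
Qed.
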